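(* Let $L$ be an $n$-dimensional nilpotent Lie algebra with $\dim L^2=1$, and let $m\ge 1$ be the integer such that $L\cong H(m)\oplus A(n-2m-1)$. Then \[\mathcal{M}^{(2)}(L)\cong\begin{cases} A\!\left(\tfrac{1}{3}n(n-1)(n-2)\right) & \text{if } m>1,\\[2pt] A\!\left(\tfrac{1}{3}n(n-1)(n-2)+3\right) & \text{if } m=1.\end{cases}\]
   Context: All Lie algebras are over a fixed field. For a Lie algebra $L$ with free presentation $L\cong F/R$, the $2$-nilpotent multiplier is $\mathcal{M}^{(2)}(L)=(R\cap F^{3})/[[R,F],F]$, where $F^3=[[F,F],F]$. $A(k)$ denotes the abelian Lie algebra of dimension $k$. The Heisenberg Lie algebra $H(m)$ is the Lie algebra of dimension $2m+1$ with $H(m)^2=Z(H(m))$ and $\dim H(m)^2=1$. Every finite dimensional nilpotent Lie algebra $L$ with $\dim L^2=1$ is isomorphic to $H(m)\oplus A(n-2m-1)$ for a unique $m\ge1$. *)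

From HB Require Import structures.
From mathcomp Require Import all_boot all_order all_algebra.
Set Implicit Arguments. Unset Strict Implicit. Unset Printing Implicit Defensive.
Import GRing.Theory.
Local Open Scope ring_scope.

(* A Lie algebra over a field K: a K-vector space with a bilinear,
   alternating bracket satisfying the Jacobi identity.
   No finiteness assumption (free Lie algebras are infinite dimensional). *)
Record lie_algebra (K : fieldType) := LieAlg {
  lcar :> lmodType K;
  lbr : lcar -> lcar -> lcar;
  lbr_linl : forall (a : K) (x y z : lcar), lbr (a *: x + y) z = a *: lbr x z + lbr y z;
  lbr_linr : forall (a : K) (x y z : lcar), lbr z (a *: x + y) = a *: lbr z x + lbr z y;
  lbr_alt : forall x : lcar, lbr x x = 0;
  lbr_jacobi : forall x y z : lcar,
      lbr x (lbr y z) + lbr y (lbr z x) + lbr z (lbr x y) = 0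
}.

Definition setT_ (T : Type) : T -> Prop := fun _ => True.
Arguments setT_ : clear implicits.

Section Defs.
Variable K : fieldType.

Section Lin.
Variable V : lmodType K.

Definition span (S : V -> Prop) : V -> Prop :=
  fun v => exists (d : nat) (c : 'I_d -> K) (x : 'I_d -> V),
      (forall i, S (x i)) /\ v = \sum_(i < d) c i *: x i.

(* dim (U / W) = d, for subspaces W <= U : there are d vectors of U, linearly
   independent modulo W, which together with W span U. *)
Definition quot_dim (U W : V -> Prop) (d : nat) : Prop :=
  exists x : 'I_d -> V,
    (forall i, U (x i)) /\
    (forall c : 'I_d -> K, W (\sum_(i < d) c i *: x i) -> forall i, c i = 0) /\
    (forall u, U u -> exists (c : 'I_d -> K) (w : V), W w /\ u = \sum_(i < d) c i *: x i + w).

Definition sdim (U : V -> Prop) (d : nat) : Prop := quot_dim U (fun v => v = 0) d.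

End Lin.


Section Lie.
Variable L : lie_algebra K.

Definition brS (A B : L -> Prop) : L -> Prop :=
  span (fun v => exists a b, A a /\ B b /\ v = lbr a b).

Fixpoint lcs (k : nat) : L -> Prop :=
  match k with
  | 0 => setT_ L
  | 1 => setT_ L
  | k'.+1 => brS (lcs k') (setT_ L)
  end.

Definition nilpotent : Prop := exists c, forall v, lcs c v -> v = 0.

Definition L2 : L -> Prop := lcs 2.
Definition L3 : L -> Prop := lcs 3.

End Lie.

Definition lie_hom (L M : lie_algebra K) (f : L -> M) : Prop :=
  (forall (a : K) (x y : L), f (a *: x + y) = a *: f x + f y) /\
  (forall x y : L, f (lbr x y) = lbr (f x) (f y)).

Definition free_on (F : lie_algebra K) (X : Type) (iota : X -> F) : Prop :=
  forall (M : lie_algebra K) (f : X -> M),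
    exists g : F -> M, lie_hom g /\ (forall x, g (iota x) = f x) /\
      (forall g' : F -> M, lie_hom g' -> (forall x, g' (iota x) = f x) ->
         forall v, g' v = g v).

(* ---------- H(m) (+) A(k) on K^(2m+1+k), written K^((m+m+k).+1) ----------
   basis x_1..x_m, y_1..y_m (coordinates 0..2m-1), z (coordinate 2m),
   and k central coordinates; the only nonzero brackets are [x_i, y_i] = z. *)
Definition heis_form (m k : nat) (u v : 'rV[K]_(m + m + k).+1) : K :=
  \sum_(i < m) (u 0 (inord i) * v 0 (inord (m + i))
                 - u 0 (inord (m + i)) * v 0 (inord i)).

Definition heis_z (m k : nat) : 'rV[K]_(m + m + k).+1 :=
  \row_(j < (m + m + k).+1) (if val j == (m + m)%N then 1 else 0).

Definition heis_br (m k : nat) (u v : 'rV[K]_(m + m + k).+1) : 'rV[K]_(m + m + k).+1 :=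
  heis_form u v *: heis_z m k.

Definition iso_heis_ab (L : lie_algebra K) (m k : nat) : Prop :=
  exists f : L -> 'rV[K]_(m + m + k).+1,
    bijective f /\
    (forall (a : K) (x y : L), f (a *: x + y) = a *: f x + f y) /\
    (forall x y : L, f (lbr x y) = heis_br (f x) (f y)).

(* For a free presentation L = F/R (pi : F -> L surjective, R = ker pi),
   M^(2)(L) = (R cap F^3) / [[R,F],F] is isomorphic to the abelian Lie algebra
   A(d): the bracket on the quotient vanishes and its dimension is d. *)
Definition two_nil_mult_abelian_of_dim (L : lie_algebra K) (F : lie_algebra K)
    (pi : F -> L) (d : nat) : Prop :=
  let R : F -> Prop := fun v => pi v = 0 in
  let RF3 : F -> Prop := fun v => R v /\ L3 v in
  let RFF : F -> Prop := brS (brS R (setT_ F)) (setT_ F) in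
  (forall a b, RF3 a -> RF3 b -> RFF (lbr a b)) /\ quot_dim RF3 RFF d.

End Defs.

Arguments L2 {K} L.
Arguments L3 {K} L.
Arguments lcs {K} L k.
Arguments nilpotent {K} L.
Arguments brS {K} L A B.

(* Since L^3 = 0 we have F^3 <= R, and the Jacobi identity gives [R, F^3] <= [[R, F], F], so
   the multiplier is abelian and equals F^3 modulo [[R, F], F].  Lift to F the basis of
   H(m) + A(n - 2m - 1) consisting of z and of n - 1 further vectors, among them the pairs
   x_t, y_t with [x_t, y_t] = z.  Modulo [[R, F], F] every [[a, b], c] is a combination of
   triple brackets of lifts.  Antisymmetry and Jacobi reduce those avoiding z to the
   n(n-1)(n-2)/3 Hall triples [[e_i, e_j], e_l] with j < i and j <= l.  Since z = [x_t, y_t]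
   modulo R, [[z, q], r] is congruent to [[[x_t, y_t], q], r], which lies in [[R, F], F] as
   soon as q is neither x_t nor y_t; for m > 1 such a t always exists, for m = 1 the three
   brackets [[[x, y], q], r] with q <= r in {x, y} remain.
   For independence, freeness gives Lie maps from F to truncated tensor algebras extending
   the projection of L onto the non-central coordinates (for m = 1 also the map sending z to
   the commutator of the letters x and y).  They send [[R, F], F] to elements without terms of
   degree <= 3 (resp. 4), while on suitable words of that degree the Hall triples (resp. the
   three extra brackets) have a diagonal matrix of coefficients. *)

From Pilot Require Import Defs.
From HB Require Import structures.
From mathcomp Require Import all_boot all_order all_algebra sesquilinear.
From mathcomp Require Import ring zify.

Set Implicit Arguments. Unset Strict Implicit. Unset Printing Implicit Defensive.

Section HallTriples.
Variable d : nat.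

Lemma sum_ltn_indicator (j : nat) : \sum_(i < d) (j < i) = d - j.+1.
Proof.
rewrite -(big_mkord xpredT (fun i => (j < i) : nat)).
by elim: d => [|e IH]; rewrite ?big_nil // big_nat_recr //= IH; case: ltnP => /=; lia.
Qed.

Lemma sum_leq_indicator (j : nat) : \sum_(i < d) (j <= i) = d - j.
Proof.
rewrite -(big_mkord xpredT (fun i => (j <= i) : nat)).
by elim: d => [|e IH]; rewrite ?big_nil // big_nat_recr //= IH; case: leqP => /=; lia.
Qed.

Lemma sum_consecutive_products : 3 * \sum_(t < d) t * t.+1 = d.+1 * d * d.-1.
Proof.
rewrite -(big_mkord xpredT (fun t => t * t.+1)).
by elim: d => [|e IH]; rewrite ?big_nil // big_nat_recr //= mulnDr IH; case: e {IH} => //=; nia.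
Qed.

Definition hall_triple (t : 'I_d * 'I_d * 'I_d) := (t.1.2 < t.1.1) && (t.1.2 <= t.2).

Lemma card_hall_triples : 3 * #|[set t | hall_triple t]| = d.+1 * d * d.-1.
Proof.
have sum_pair (I J : finType) (G : I * J -> nat) : \sum_p G p = \sum_i \sum_j G (i, j).
  by rewrite pair_bigA; apply: eq_bigr => -[].
have count_j (j : 'I_d) :
    \sum_(i < d) \sum_(l < d) hall_triple (i, j, l) = (d - j.+1) * (d - j).
  rewrite -sum_ltn_indicator -sum_leq_indicator big_distrl; apply: eq_bigr => i _.
  by rewrite big_distrr; apply: eq_bigr => l _; rewrite /= mulnb.
have -> : #|[set t | hall_triple t]| = \sum_t hall_triple t.
  by rewrite -sum1_card big_mkcond; apply: eq_bigr => t _; rewrite inE; case: hall_triple.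
rewrite -sum_consecutive_products !sum_pair exchange_big (eq_bigr _ (fun j _ => count_j j)).
rewrite (reindex_inj rev_ord_inj); congr (3 * _); apply: eq_bigr => j _ /=.
by have := ltn_ord j => lt_j_d; congr (_ * _); lia.
Qed.

End HallTriples.

Import GRing.Theory.
Local Open Scope ring_scope.

Lemma lbr_bilinear (K : fieldType) (L : lie_algebra K) :
  bilinear_for *:%R *:%R (@lbr K L).
Proof. by split=> z a x y; [exact: lbr_linl|exact: lbr_linr]. Qed.

HB.instance Definition _ (K : fieldType) (L : lie_algebra K) :=
  bilinear_isBilinear.Build K L L L *:%R *:%R (@lbr K L) (lbr_bilinear L).

Section LieAlgebra.
Variables (K : fieldType) (L : lie_algebra K).
Implicit Types u x y z : L.

Lemma lbr_anti x y : lbr x y = - lbr y x.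
Proof.
have := lbr_alt (x + y); rewrite linearDl !linearDr /= !lbr_alt add0r addr0.
by move/eqP; rewrite addr_eq0 => /eqP.
Qed.

Lemma lbr_jacobi_swap u x y : lbr (lbr u y) x = lbr (lbr u x) y + lbr u (lbr y x).
Proof.
apply/eqP; rewrite eq_sym -subr_eq0 [lbr (lbr u y) x]lbr_anti opprK.
by rewrite [lbr (lbr u x) y]lbr_anti [lbr u x]lbr_anti linearNr /= opprK addrAC lbr_jacobi.
Qed.

End LieAlgebra.

Section Span.
Variables (K : fieldType) (V : lmodType K).
Implicit Types (S : V -> Prop) (u v : V).

Lemma span_ind S (P : V -> Prop) :
  P 0 -> (forall a u v, P u -> P v -> P (a *: u + v)) ->
  (forall v, S v -> P v) -> forall v, Defs.span S v -> P v.
Proof.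
move=> P0 PZD PS v [d [c [x [Sx ->]]]].
elim: d c x Sx => [|d IH] c x Sx; first by rewrite big_ord0.
rewrite big_ord_recr /= addrC; apply: PZD; first exact: PS.
exact: (IH (fun i => c (widen_ord (leqnSn d) i)) (fun i => x (widen_ord (leqnSn d) i))).
Qed.

Lemma span_gen S v : S v -> Defs.span S v.
Proof.
by move=> Sv; exists 1%N, (fun=> 1), (fun=> v); rewrite big_ord1 scale1r.
Qed.

Lemma span0 S : Defs.span S 0.
Proof. by exists 0%N, (fun=> 0), (fun=> 0); split; [case|rewrite big_ord0]. Qed.

Lemma spanZD S a u v : Defs.span S u -> Defs.span S v -> Defs.span S (a *: u + v).
Proof.
move=> [d1 [c1 [x1 [S1 ->]]]] [d2 [c2 [x2 [S2 ->]]]].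
pose c i := match split i with inl j => a * c1 j | inr j => c2 j end.
pose x i := match split i with inl j => x1 j | inr j => x2 j end.
exists (d1 + d2)%N, c, x; split; first by move=> i; rewrite /x; case: (split i).
rewrite big_split_ord scaler_sumr; congr (_ + _); apply: eq_bigr => i _.
  by rewrite /c /x (unsplitK (inl i)) scalerA.
by rewrite /c /x (unsplitK (inr i)).
Qed.

Lemma spanD S u v : Defs.span S u -> Defs.span S v -> Defs.span S (u + v).
Proof. by move=> Su Sv; rewrite -[u]scale1r; apply: spanZD. Qed.

Lemma spanZ S a v : Defs.span S v -> Defs.span S (a *: v).
Proof. by move=> Sv; rewrite -[_ *: _]addr0; apply: spanZD => //; apply: span0. Qed.

Lemma spanN S v : Defs.span S v -> Defs.span S (- v).
Proof. by rewrite -scaleN1r; apply: spanZ. Qed.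

Lemma spanB S u v : Defs.span S u -> Defs.span S v -> Defs.span S (u - v).
Proof. by move=> Su Sv; apply/spanD/spanN. Qed.

Lemma span_sum S (I : Type) (r : seq I) (P : pred I) (G : I -> V) :
  (forall i, P i -> Defs.span S (G i)) -> Defs.span S (\sum_(i <- r | P i) G i).
Proof.
by move=> SG; elim/big_rec: _ => [|i v Pi Sv]; [apply: span0|apply/spanD/Sv/SG].
Qed.

Lemma span_range_decomp S (d : nat) (x : 'I_d -> V) u :
  Defs.span (fun v => Defs.span S v \/ exists i, v = x i) u ->
  exists (c : 'I_d -> K) (w : V), Defs.span S w /\ u = \sum_i c i *: x i + w.
Proof.
move=> Su; elim/span_ind: u / Su => [|a u1 u2 [c1 [w1 [S1 ->]]] [c2 [w2 [S2 ->]]]|v [Sv|[i ->]]].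
- by exists (fun=> 0), 0; split; [apply: span0|rewrite big1 ?addr0 // => i; rewrite scale0r].
- exists (fun i => a * c1 i + c2 i), (a *: w1 + w2); split; first exact: spanZD.
  rewrite scalerDr scaler_sumr addrACA -big_split /=; congr (_ + _).
  by apply: eq_bigr => i _; rewrite scalerDl scalerA.
- by exists (fun=> 0), v; split => //; rewrite big1 ?add0r // => i; rewrite scale0r.
- exists (fun j => (j == i)%:R), 0; split; first exact: span0.
  rewrite addr0 (bigD1 i) //= eqxx scale1r big1 ?addr0 // => j /negbTE ->.
  by rewrite scale0r.
Qed.

End Span.

Section LieSubspaces.
Variables (K : fieldType) (L : lie_algebra K).
Implicit Types (A B : L -> Prop) (u x y z : L).

Lemma brS_gen A B x y : A x -> B y -> brS L A B (lbr x y).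
Proof. by move=> Ax By; apply: span_gen; exists x, y. Qed.

Lemma L3_gen x y z : L3 L (lbr (lbr x y) z).
Proof. by apply: brS_gen => //; apply: brS_gen. Qed.

Lemma L3_ind (P : L -> Prop) :
  P 0 -> (forall a u v, P u -> P v -> P (a *: u + v)) ->
  (forall x y z, P (lbr (lbr x y) z)) -> forall u, L3 L u -> P u.
Proof.
move=> P0 PZD Pxyz u L3u; elim/span_ind: u / L3u => // _ [u [z [L2u [_ ->]]]].
elim/span_ind: u / L2u => [|a u v Pu Pv|_ [x [y [_ [_ ->]]]]] //.
- by rewrite linear0l.
- by rewrite linearPl /=; apply: PZD.
Qed.

End LieSubspaces.

Lemma lie_hom_comp (K : fieldType) (L M N : lie_algebra K) (f : L -> M) (g : M -> N) :
  lie_hom f -> lie_hom g -> lie_hom (g \o f).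
Proof. by move=> [fl fb] [gl gb]; split=> [a x y|x y] /=; rewrite ?fl ?gl ?fb ?gb. Qed.

Lemma free_on_hom_eq (K : fieldType) (F : lie_algebra K) (X : Type) (iota : X -> F) :
  free_on iota -> forall (M : lie_algebra K) (g1 g2 : F -> M),
  lie_hom g1 -> lie_hom g2 -> (forall x, g1 (iota x) = g2 (iota x)) -> g1 =1 g2.
Proof.
move=> free M g1 g2 hom1 hom2 E v; have [g [_ [_ uniq]]] := free M (g2 \o iota).
by rewrite (uniq g1) ?(uniq g2).
Qed.

(* [tens d] has one coordinate for each word of length 1 to 4 in the letters ['I_d]: it is
   the tensor algebra of [K^d] in degrees 1 to 4.  [tens_br D] is the commutator
   [a b - b a] with all words longer than [D] discarded. *)
Section TensorModel.
Variables (K : fieldType) (d : nat).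

Definition word :=
  ('I_d + 'I_d * 'I_d + ('I_d * 'I_d * 'I_d + 'I_d * 'I_d * 'I_d * 'I_d))%type.

Definition word_size (w : word) : nat :=
  match w with inl (inl _) => 1 | inl (inr _) => 2 | inr (inl _) => 3 | inr (inr _) => 4 end.

Definition tens := {ffun word -> K^o}.
Implicit Types a b x y z A B Y Z : tens.

Definition tcoef1 a i : K := a (inl (inl i)).
Definition tcoef2 a i j : K := a (inl (inr (i, j))).
Definition tcoef3 a i j l : K := a (inr (inl (i, j, l))).
Definition tcoef4 a i j l o : K := a (inr (inr (i, j, l, o))).

Definition tens_commr a b (w : word) : K :=
  match w with
  | inl (inl _) => 0
  | inl (inr (i, j)) => tcoef1 a i * tcoef1 b j - tcoef1 b i * tcoef1 a j
  | inr (inl (i, j, l)) =>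
      (tcoef1 a i * tcoef2 b j l + tcoef2 a i j * tcoef1 b l)
      - (tcoef1 b i * tcoef2 a j l + tcoef2 b i j * tcoef1 a l)
  | inr (inr (i, j, l, o)) =>
      (tcoef1 a i * tcoef3 b j l o + tcoef2 a i j * tcoef2 b l o + tcoef3 a i j l * tcoef1 b o)
      - (tcoef1 b i * tcoef3 a j l o + tcoef2 b i j * tcoef2 a l o + tcoef3 b i j l * tcoef1 a o)
  end.

Definition tens_br (D : nat) a b : tens :=
  [ffun w => if (word_size w <= D)%N then (tens_commr a b w : K^o) else 0].

Definition tens_trunc (D : nat) a : tens := [ffun w => if (word_size w <= D)%N then a w else 0].

Section Bracket.
Variable D : nat.

Lemma tens_br_linl (c : K) x y z : tens_br D (c *: x + y) z = c *: tens_br D x z + tens_br D y z.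
Proof.
apply/ffunP => w; rewrite !ffunE; case: ifP => _; last by rewrite scaler0 addr0.
by case: w => [[i|[i j]]|[[[i j] l]|[[[i j] l] o]]];
  rewrite /= /tcoef1 /tcoef2 /tcoef3 ?ffunE /GRing.scale /=; ring.
Qed.

Lemma tens_br_linr (c : K) x y z : tens_br D z (c *: x + y) = c *: tens_br D z x + tens_br D z y.
Proof.
apply/ffunP => w; rewrite !ffunE; case: ifP => _; last by rewrite scaler0 addr0.
by case: w => [[i|[i j]]|[[[i j] l]|[[[i j] l] o]]];
  rewrite /= /tcoef1 /tcoef2 /tcoef3 ?ffunE /GRing.scale /=; ring.
Qed.

Lemma tens_br_alt x : tens_br D x x = 0.
Proof.
apply/ffunP => w; rewrite !ffunE; case: ifP => _ //.
by case: w => [[i|[i j]]|[[[i j] l]|[[[i j] l] o]]] /=; ring.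
Qed.

Lemma tens_br_jacobi x y z :
  tens_br D x (tens_br D y z) + tens_br D y (tens_br D z x) + tens_br D z (tens_br D x y) = 0.
Proof.
apply/ffunP => w; rewrite !ffunE; case: ifP => le_w_D; last by rewrite !addr0.
have le_D s : (s < word_size w)%N -> (s <= D)%N by move=> lt_s_w; lia.
case: w le_w_D le_D => [[i|[i j]]|[[[i j] l]|[[[i j] l] o]]] /= _ le_D.
- ring.
- by rewrite /tcoef1 !ffunE /= le_D //; ring.
- by rewrite /tcoef1 /tcoef2 !ffunE /= !le_D //= /tcoef1; ring.
- by rewrite /tcoef1 /tcoef2 /tcoef3 !ffunE /= !le_D //= /tcoef1 /tcoef2; ring.
Qed.

End Bracket.
End TensorModel.

Definition tens_lie (K : fieldType) (d D : nat) : lie_algebra K :=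
  LieAlg (@tens_br_linl K d D) (@tens_br_linr K d D) (@tens_br_alt K d D) (@tens_br_jacobi K d D).

Section TensorLie.
Variables (K : fieldType) (d : nat).
Implicit Types a b A B X Y Z : tens K d.

Lemma tens_trunc_hom D1 D2 : (D1 <= D2)%N ->
  lie_hom (tens_trunc D1 : tens_lie K d D2 -> tens_lie K d D1).
Proof.
move=> le_D; split=> [c x y|x y]; apply/ffunP => w; rewrite !ffunE.
  by case: ifP => _; rewrite ?ffunE ?scaler0 ?addr0.
case: ifP => // le_w; rewrite (leq_trans le_w le_D).
have le_D1 s : (s < word_size w)%N -> (s <= D1)%N by move=> ?; lia.
case: w le_w le_D1 => [[i|[i j]]|[[[i j] l]|[[[i j] l] o]]] /= _ le_D1 //.
all: by rewrite /tcoef1 /tcoef2 /tcoef3 !ffunE /= !le_D1.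
Qed.

Definition tens_order_gt (k : nat) a := forall w, (word_size w <= k)%N -> a w = 0.

Lemma tens_order_gt0 a : tens_order_gt 0 a.
Proof. by case=> [[]|[]]. Qed.

Lemma tens_order_gt_lin k (c : K) a b :
  tens_order_gt k a -> tens_order_gt k b -> tens_order_gt k (c *: a + b).
Proof. by move=> ha hb w le_w; rewrite !ffunE ha // hb // scaler0 addr0. Qed.

Lemma tens_order_gt_br D k a b : tens_order_gt k a -> tens_order_gt k.+1 (tens_br D a b).
Proof.
move=> ha w le_w; rewrite ffunE; case: ifP => // _.
have a0 v : (word_size v < word_size w)%N -> a v = 0 by move=> ?; apply: ha; lia.
case: w le_w a0 => [[i|[i j]]|[[[i j] l]|[[[i j] l] o]]] /= _ a0 //.
all: rewrite /tcoef1 /tcoef2 /tcoef3 ?(a0 (inl (inl _))) ?(a0 (inl (inr _))) ?(a0 (inr (inl _))) //.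
all: by rewrite /=; ring.
Qed.

Lemma tcoef3D a b i j l : tcoef3 (a + b) i j l = tcoef3 a i j l + tcoef3 b i j l.
Proof. by rewrite /tcoef3 ffunE. Qed.

Lemma tcoef4D a b i j l o : tcoef4 (a + b) i j l o = tcoef4 a i j l o + tcoef4 b i j l o.
Proof. by rewrite /tcoef4 ffunE. Qed.

Lemma tcoef1_br D a b i : tcoef1 (tens_br D a b) i = 0.
Proof. by rewrite /tcoef1 ffunE; case: ifP. Qed.

Lemma tcoef3_br2 D A B Z i j l : (3 <= D)%N ->
  tcoef3 (tens_br D (tens_br D A B) Z) i j l =
    tcoef1 A i * tcoef1 B j * tcoef1 Z l - tcoef1 B i * tcoef1 A j * tcoef1 Z l
  - tcoef1 Z i * tcoef1 A j * tcoef1 B l + tcoef1 Z i * tcoef1 B j * tcoef1 A l.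
Proof.
move=> le_3_D; have le_2_D : (2 <= D)%N by lia.
by rewrite /tcoef3 ffunE /= le_3_D /tcoef2 !ffunE /= le_2_D !tcoef1_br; ring.
Qed.

Lemma tcoef4_br_order2 D X Y i j l o : (4 <= D)%N -> tens_order_gt 2 X ->
  tcoef4 (tens_br D X Y) i j l o = tcoef3 X i j l * tcoef1 Y o - tcoef1 Y i * tcoef3 X j l o.
Proof.
move=> le_4_D hX; rewrite /tcoef4 ffunE /= le_4_D /tcoef1 /tcoef2.
by rewrite !(hX (inl (inl _))) ?(hX (inl (inr _))) //; ring.
Qed.

Lemma tens_trunc_free_hom (F L : lie_algebra K) (T : Type) (iota : T -> F) (pi : F -> L)
    D1 D2 (ell : L -> tens_lie K d D1) (phi : F -> tens_lie K d D2) :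
  free_on iota -> lie_hom pi -> lie_hom ell -> lie_hom phi -> (D1 <= D2)%N ->
  (forall x, tens_trunc D1 (ell x) = ell x) ->
  (forall t, phi (iota t) = ell (pi (iota t))) ->
  forall v, tens_trunc D1 (phi v) = ell (pi v).
Proof.
move=> free pi_hom ell_hom phi_hom le_D ellT phiE.
apply: (free_on_hom_eq free (M := tens_lie K d D1)).
- exact: lie_hom_comp phi_hom (tens_trunc_hom le_D).
- exact: lie_hom_comp pi_hom ell_hom.
- by move=> t /=; rewrite phiE ellT.
Qed.

End TensorLie.

Section Presentation.
Variables (K : fieldType) (F L : lie_algebra K) (pi : F -> L).
Implicit Types (r u v a b : F).

Definition Rker v := pi v = 0.
Definition RF := brS F Rker (setT_ F).
Definition RFF := brS F RF (setT_ F).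

Lemma RF_gen r a : Rker r -> RF (lbr r a).
Proof. by move=> Rr; apply: brS_gen. Qed.

Lemma RFF_of_RF u b : RF u -> RFF (lbr u b).
Proof. by move=> RFu; apply: brS_gen. Qed.

Lemma RFF_gen r a b : Rker r -> RFF (lbr (lbr r a) b).
Proof. by move=> Rr; apply/RFF_of_RF/RF_gen. Qed.

Lemma RFF_gen_mid r a b : Rker r -> RFF (lbr (lbr a r) b).
Proof. by move=> Rr; rewrite [lbr a r]lbr_anti linearNl /=; apply/spanN/RFF_gen. Qed.

Lemma RFF_gen_inner r a b : Rker r -> RFF (lbr r (lbr a b)).
Proof.
move=> Rr; have /eqP := lbr_jacobi_swap r b a.
by rewrite addrC -subr_eq eq_sym => /eqP ->; apply: spanB; apply: RFF_gen.
Qed.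

Lemma RFF_gen_last r a b : Rker r -> RFF (lbr (lbr a b) r).
Proof.
by move=> Rr; rewrite lbr_anti [lbr a b]lbr_anti linearNr /= opprK; apply: RFF_gen_inner.
Qed.

Lemma RFF_br_L3 r u : Rker r -> L3 F u -> RFF (lbr r u).
Proof.
move=> Rr L3u; elim/L3_ind: u / L3u => [|c u v|x y z]; first by rewrite linear0r; apply: span0.
  by rewrite linearPr /=; apply: spanZD.
exact: RFF_gen_inner.
Qed.

Section BasisModRFF.
Variables (d : nat) (x : 'I_d -> F).

Definition span_modRFF := Defs.span (fun v => RFF v \/ exists i, v = x i).

Lemma span_modRFF_RFF v : RFF v -> span_modRFF v.
Proof. by move=> RFFv; apply: span_gen; left. Qed.

Lemma span_modRFF_basis i : span_modRFF (x i).
Proof. by apply: span_gen; right; exists i. Qed.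

Lemma span_modRFF_congr u v : RFF (u - v) -> span_modRFF v -> span_modRFF u.
Proof. by move=> RFFuv Sv; rewrite -(subrK v u); apply/spanD/Sv/span_modRFF_RFF. Qed.

Lemma two_nil_mult_of_basis :
  (forall u, L3 F u -> Rker u) ->
  (forall i, L3 F (x i)) ->
  (forall c, RFF (\sum_i c i *: x i) -> forall i, c i = 0) ->
  (forall u, L3 F u -> span_modRFF u) ->
  two_nil_mult_abelian_of_dim pi d.
Proof.
move=> RL3 L3x x_free x_span; split=> [u v [Ru _] [_ L3v]|]; first exact: RFF_br_L3.
exists x; split; [|split] => //; first by move=> i; split; [apply: RL3|].
by move=> u [_ /x_span/span_range_decomp].
Qed.

End BasisModRFF.
End Presentation.

Lemma sum_indicator_eq (R : nzRingType) (m p : nat) (P : pred nat) :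
  \sum_(i < m) ((i == p :> nat) && P i)%:R = ((p < m)%N && P p)%:R :> R.
Proof.
case: (ltnP p m) => [lt_p_m|le_m_p] /=; last first.
  by rewrite big1 // => i _; case: eqP => // eq_ip; have := ltn_ord i; lia.
rewrite (bigD1 (Ordinal lt_p_m)) //= eqxx big1 ?addr0 // => i.
by rewrite -val_eqE /= => /negbTE ->.
Qed.

Section HeisenbergForm.
Variables (K : fieldType) (m k : nat).
Local Notation n := (m + m + k).+1.

Definition heis_zidx : 'I_n := inord (m + m).

Lemma heis_zidx_val : heis_zidx = m + m :> nat.
Proof. by rewrite /heis_zidx inordK //; lia. Qed.

Lemma heis_z_e : heis_z K m k = 'e_heis_zidx.
Proof.
apply/rowP => j; rewrite !mxE eqxx /= -val_eqE /= inordK; [by case: eqP|lia].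
Qed.

Lemma heis_form_e (p q : 'I_n) :
  heis_form 'e_p 'e_q =
  ((p < m)%N && (m + p == q :> nat))%:R - ((q < m)%N && (m + q == p :> nat))%:R :> K.
Proof.
have e_inord (r : 'I_n) (j : nat) : (j < n)%N -> ('e_r : 'rV[K]_n) 0 (inord j) = (j == r)%:R.
  by move=> lt_j_n; rewrite mxE eqxx -val_eqE /= inordK.
rewrite /heis_form sumrB; congr (_ - _).
  rewrite -(@sum_indicator_eq _ _ _ (fun i => m + i == q :> nat)%N); apply: eq_bigr => i _.
  by rewrite !e_inord -?natrM ?mulnb //; have := ltn_ord i; lia.
rewrite -(@sum_indicator_eq _ _ _ (fun i => m + i == p :> nat)%N); apply: eq_bigr => i _.
by rewrite !e_inord -?natrM ?mulnb 1?andbC //; have := ltn_ord i; lia.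
Qed.

Lemma heis_form_e_eq0 (p q : 'I_n) :
  ~~ ((p < m)%N && (m + p == q :> nat)) -> ~~ ((q < m)%N && (m + q == p :> nat)) ->
  heis_form 'e_p 'e_q = 0 :> K.
Proof. by rewrite heis_form_e => /negbTE-> /negbTE->; rewrite subrr. Qed.

Lemma heis_form_zl (s : K) (w : 'rV[K]_n) : heis_form (s *: 'e_heis_zidx) w = 0.
Proof.
rewrite /heis_form big1 // => i _; have := ltn_ord i => lt_i_m.
rewrite !mxE eqxx -!val_eqE /= !inordK; [|lia..].
have -> : (i == m + m :> nat) = false by apply/negbTE; lia.
have -> : (m + i == m + m :> nat) = false by apply/negbTE; lia.
by rewrite !mulr0 !mul0r subrr.
Qed.

End HeisenbergForm.

Lemma RFF_order_gt (K : fieldType) (F L : lie_algebra K) (pi : F -> L) (d D k : nat)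
    (phi : F -> tens_lie K d D) :
  lie_hom phi -> (forall r, Rker pi r -> tens_order_gt k (phi r)) ->
  forall u, RFF pi u -> tens_order_gt k.+2 (phi u).
Proof.
move=> [phi_lin phi_br] phiR.
have phi0 : phi 0 = 0 by have := phi_lin (-1) 0 0; rewrite scaler0 addr0 scaleN1r addNr.
have order0 j : tens_order_gt j (phi 0) by rewrite phi0 => w _; rewrite ffunE.
have order_span j (P : F -> Prop) : (forall v, P v -> tens_order_gt j (phi v)) ->
    forall u, Defs.span P u -> tens_order_gt j (phi u).
  move=> Pj u Su; elim/span_ind: u / Su => [|c u v ju jv|//]; first exact: order0.
  by rewrite phi_lin; apply: tens_order_gt_lin.
apply: (order_span) => _ [u [b [RFu [_ ->]]]]; rewrite phi_br; apply: tens_order_gt_br.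
move: u RFu; apply: order_span => _ [r [a [Rr [_ ->]]]]; rewrite phi_br.
exact/tens_order_gt_br/phiR.
Qed.

Section HeisenbergPresentation.
Variables (K : fieldType) (L : lie_algebra K) (m k : nat).
Local Notation d := (m + m + k)%N.
Local Notation n := d.+1.
Local Notation zc := (heis_zidx m k).
Variables (f : L -> 'rV[K]_n) (g : 'rV[K]_n -> L).
Hypotheses (fK : cancel f g) (gK : cancel g f) (f_lin : linear f).
Hypothesis f_br : forall x y, f (lbr x y) = heis_br (f x) (f y).
HB.instance Definition _ := GRing.isLinear.Build K L _ *:%R f f_lin.

Lemma f_lbr x y : f (lbr x y) = heis_form (f x) (f y) *: 'e_zc.
Proof. by rewrite f_br /heis_br heis_z_e. Qed.

Lemma lbr3_eq0 x y z : lbr (lbr x y) z = 0 :> L.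
Proof. by apply: (can_inj fK); rewrite !f_lbr heis_form_zl scale0r linear0. Qed.

Variables (F : lie_algebra K) (pi : F -> L).
Hypotheses (pi_lin : linear pi) (pi_br : forall x y, pi (lbr x y) = lbr (pi x) (pi y)).
HB.instance Definition _ := GRing.isLinear.Build K F L *:%R pi pi_lin.
Local Notation R := (Rker pi).
Local Notation RF := (RF pi).
Local Notation RFF := (RFF pi).

Lemma Rker_L3 u : L3 F u -> R u.
Proof.
move=> L3u; elim/L3_ind: u / L3u => [|c u v Ru Rv|x y z]; rewrite /Rker.
- exact: linear0.
- by rewrite linearP /= Ru Rv scaler0 addr0.
- by rewrite !pi_br lbr3_eq0.
Qed.

Variable e : 'I_n -> F.
Hypothesis eE : forall p, pi (e p) = g 'e_p.

Lemma Rker_e_br p q : R (lbr (e p) (e q) - heis_form 'e_p 'e_q *: e zc).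
Proof.
apply: (can_inj fK); rewrite linearB linearZ /= pi_br !eE linear0 linearB linearZ /=.
by rewrite f_lbr !gK subrr.
Qed.

Definition sect (a : L) : F := \sum_p f a 0 p *: e p.

Lemma pi_sect a : pi (sect a) = a.
Proof.
apply: (can_inj fK); rewrite [RHS]row_sum_delta linear_sum linear_sum; apply: eq_bigr => p _.
by rewrite !linearZ /= eE gK.
Qed.

Lemma Rker_sub_sect v : R (v - sect (pi v)).
Proof. by rewrite /Rker linearB /= pi_sect subrr. Qed.

Definition lbr3e p q r := lbr (lbr (e p) (e q)) (e r).

Lemma lbr3e_anti p q r : lbr3e p q r = - lbr3e q p r.
Proof. by rewrite /lbr3e [lbr (e p) _]lbr_anti linearNl. Qed.

Lemma lbr3e_cycle p q r : lbr3e p q r = - lbr3e q r p - lbr3e r p q.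
Proof.
have J : lbr3e q r p + lbr3e r p q + lbr3e p q r = 0.
  have := lbr_jacobi (e p) (e q) (e r).
  rewrite [lbr (e p) _]lbr_anti [lbr (e q) (lbr _ _)]lbr_anti [lbr (e r) (lbr _ _)]lbr_anti.
  by rewrite -!opprD => /eqP; rewrite oppr_eq0 => /eqP.
by rewrite -[lbr3e p q r](addKr (lbr3e q r p + lbr3e r p q)) J addr0 opprD.
Qed.

Lemma lbr3_sect a b c : lbr (lbr (sect a) (sect b)) (sect c) =
  \sum_p \sum_q \sum_r (f a 0 p * f b 0 q * f c 0 r) *: lbr3e p q r.
Proof.
rewrite /sect !linear_sumlz /=; apply: eq_bigr => p _.
rewrite linearZl_LR /= linearZl_LR /= [lbr (e p) _]linear_sumr /= linear_sumlz /= scaler_sumr.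
apply: eq_bigr => q _.
rewrite linearZr_LR /= linearZl_LR /= linear_sumr /= !scaler_sumr; apply: eq_bigr => r _.
by rewrite linearZr_LR /= !scalerA.
Qed.

Lemma RFF_lbr3_sect a b c :
  RFF (lbr (lbr a b) c - lbr (lbr (sect (pi a)) (sect (pi b))) (sect (pi c))).
Proof.
set a' := sect (pi a); set b' := sect (pi b); set c' := sect (pi c).
have telescope (x u v y : F) : x - y = (x - u) + (u - v) + (v - y).
  by rewrite !addrA !subrK.
rewrite (telescope _ (lbr (lbr a' b) c) (lbr (lbr a' b') c)).
apply: spanD; first apply: spanD.
- by rewrite -linearBl /= -linearBl /=; apply: RFF_gen (Rker_sub_sect a).
- by rewrite -linearBl /= -linearBr /=; apply: RFF_gen_mid (Rker_sub_sect b).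
- by rewrite -linearBr /=; apply: RFF_gen_last (Rker_sub_sect c).
Qed.

Definition gen_idx (i : 'I_d) : 'I_n := lift zc i.
Definition hall_lbr3e (t : 'I_d * 'I_d * 'I_d) :=
  lbr3e (gen_idx t.1.1) (gen_idx t.1.2) (gen_idx t.2).

Section Spanning.
Variables (D : nat) (x : 'I_D -> F).
Local Notation S := (span_modRFF pi x).
Hypothesis S_hall : forall t, hall_triple t -> S (hall_lbr3e t).
Hypothesis S_lbr3e_z : forall q r, S (lbr3e zc q r).

Lemma span_modRFF_lbr3e p q r : S (lbr3e p q r).
Proof.
have S_gen (i j l : 'I_d) : (j < i)%N -> S (lbr3e (gen_idx i) (gen_idx j) (gen_idx l)).
  move=> lt_ji; case: (leqP j l) => [le_jl|lt_lj].
    by apply: (S_hall (t := (i, j, l))); rewrite /hall_triple /= lt_ji.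
  rewrite lbr3e_cycle [lbr3e (gen_idx l) _ _]lbr3e_anti opprK; apply: spanD; first apply: spanN.
    by apply: (S_hall (t := (j, l, i))); rewrite /hall_triple /=; lia.
  by apply: (S_hall (t := (i, l, j))); rewrite /hall_triple /=; lia.
case: (unliftP zc p) => [i ->|->]; last exact: S_lbr3e_z.
case: (unliftP zc q) => [j ->|->]; last by rewrite lbr3e_anti; apply/spanN/S_lbr3e_z.
case: (unliftP zc r) => [l ->|->]; last first.
  by rewrite lbr3e_cycle lbr3e_anti opprK; apply/spanB/S_lbr3e_z/S_lbr3e_z.
case: (ltngtP j i) => [lt_ji|lt_ij|/val_inj eq_ij]; first exact: S_gen.
  by rewrite lbr3e_anti; apply/spanN/S_gen.
by rewrite /lbr3e eq_ij lbr_alt linear0l; apply: span0.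
Qed.

Lemma span_modRFF_L3 u : L3 F u -> S u.
Proof.
move=> L3u; elim/L3_ind: u / L3u => [|c u v|a b c]; [exact: span0|exact: spanZD|].
apply: (span_modRFF_congr (RFF_lbr3_sect a b c)); rewrite lbr3_sect.
by do 3!apply: span_sum => ? _; apply/spanZ/span_modRFF_lbr3e.
Qed.

End Spanning.

Definition x_idx (t : nat) : 'I_n := inord t.
Definition y_idx (t : nat) : 'I_n := inord (m + t).
Definition lbr_xy t := lbr (e (x_idx t)) (e (y_idx t)).

Lemma x_idx_val t : (t < m)%N -> x_idx t = t :> nat.
Proof. by move=> lt_tm; rewrite /x_idx inordK //; lia. Qed.

Lemma y_idx_val t : (t < m)%N -> y_idx t = m + t :> nat.
Proof. by move=> lt_tm; rewrite /y_idx inordK //; lia. Qed.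

Lemma Rker_e_br0 (p q : 'I_n) :
  ~~ ((p < m)%N && (m + p == q :> nat)) -> ~~ ((q < m)%N && (m + q == p :> nat)) ->
  R (lbr (e p) (e q)).
Proof.
by move=> not_pq not_qp; have := Rker_e_br p q; rewrite heis_form_e_eq0 // scale0r subr0.
Qed.

Lemma Rker_ez_sub_lbr_xy t : (t < m)%N -> R (e zc - lbr_xy t).
Proof.
move=> lt_tm; have := Rker_e_br (x_idx t) (y_idx t).
rewrite heis_form_e x_idx_val // y_idx_val // lt_tm eqxx ltnNge leq_addr /= subr0 scale1r.
by move=> R_W; rewrite /Rker -opprB linearN /= R_W oppr0.
Qed.

Lemma RF_lbr_xy_e t (p : 'I_n) :
  (t < m)%N -> p != t :> nat -> p != m + t :> nat -> RF (lbr (lbr_xy t) (e p)).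
Proof.
move=> lt_tm ne_pt ne_pmt; rewrite /lbr_xy -/(lbr3e _ _ _) lbr3e_cycle.
apply: spanB; [apply: spanN|]; apply/RF_gen/Rker_e_br0.
all: by rewrite ?(x_idx_val lt_tm) ?(y_idx_val lt_tm); apply/negP; lia.
Qed.

Lemma RFF_lbr3e_z_sub t q r : (t < m)%N -> RFF (lbr3e zc q r - lbr (lbr (lbr_xy t) (e q)) (e r)).
Proof. by move=> lt_tm; rewrite /lbr3e -!linearBl /=; apply/RFF_gen/Rker_ez_sub_lbr_xy. Qed.

Lemma RFF_lbr3e_z q r : (1 < m)%N -> RFF (lbr3e zc q r).
Proof.
move=> lt_1m; pose t := if (q == 0 :> nat) || (q == m :> nat) then 1%N else 0%N.
have lt_tm : (t < m)%N by rewrite /t; case: ifP => _; lia.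
rewrite -(subrK (lbr (lbr (lbr_xy t) (e q)) (e r)) (lbr3e zc q r)).
apply: spanD; first exact: RFF_lbr3e_z_sub.
by apply/RFF_of_RF/RF_lbr_xy_e; rewrite // /t; case: ifP; lia.
Qed.

Definition lbr4_xy q r := lbr (lbr (lbr_xy 0) (e q)) (e r).

Lemma pi_hom : lie_hom pi.
Proof. exact: (conj pi_lin pi_br). Qed.

Variables (X : Type) (iota : X -> F).
Hypothesis free : free_on iota.

Definition tens_of_gen (a : L) : tens K d :=
  [ffun w => if w is inl (inl i) then (f a 0 (gen_idx i) : K^o) else 0].

Lemma tens_of_gen_hom : lie_hom (tens_of_gen : L -> tens_lie K d 1).
Proof.
split=> [c a b|a b]; apply/ffunP => -[[i|?]|[?|?]]; rewrite !ffunE //=.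
- by rewrite linearP !mxE.
- by rewrite scaler0 addr0.
- by rewrite scaler0 addr0.
- by rewrite scaler0 addr0.
- by rewrite f_lbr mxE mxE eqxx eq_sym (negbTE (neq_lift zc i)) mulr0.
Qed.

Lemma tens_of_gen_trunc a : tens_trunc 1 (tens_of_gen a) = tens_of_gen a.
Proof. by apply/ffunP => -[[i|?]|[?|?]]; rewrite !ffunE. Qed.

Variable phi_gen : F -> tens_lie K d 3.
Hypothesis phi_gen_hom : lie_hom phi_gen.
Hypothesis phi_gen_iota : forall t, phi_gen (iota t) = tens_of_gen (pi (iota t)).
HB.instance Definition _ := GRing.isLinear.Build K F (tens K d) *:%R phi_gen phi_gen_hom.1.

Lemma coef1_phi_gen v i : tcoef1 (phi_gen v) i = f (pi v) 0 (gen_idx i).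
Proof.
have := tens_trunc_free_hom free pi_hom tens_of_gen_hom phi_gen_hom (isT : (1 <= 3)%N)
  tens_of_gen_trunc phi_gen_iota v.
by move/ffunP/(_ (inl (inl i))); rewrite !ffunE.
Qed.

Lemma coef1_phi_gen_e (a i : 'I_d) : tcoef1 (phi_gen (e (gen_idx a))) i = (i == a :> nat)%:R.
Proof. by rewrite coef1_phi_gen eE gK mxE eqxx (inj_eq (@lift_inj _ zc)). Qed.

Lemma coef3_phi_gen_RFF u : RFF u -> forall i j l, tcoef3 (phi_gen u) i j l = 0.
Proof.
move=> RFFu i j l; apply: (RFF_order_gt (k := 1) phi_gen_hom _ RFFu) => // r Rr.
by case=> [[i'|?]|[?|?]] // _; rewrite -/(tcoef1 _ i') coef1_phi_gen Rr linear0 mxE.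
Qed.

Lemma coef3_phi_gen_lbr4_xy q r i j l : tcoef3 (phi_gen (lbr4_xy q r)) i j l = 0.
Proof.
rewrite /lbr4_xy /lbr_xy !phi_gen_hom.2.
by apply: (@tens_order_gt_br _ _ _ 2) => //; do 2!apply: tens_order_gt_br; apply: tens_order_gt0.
Qed.

Lemma coef3_phi_gen_lbr3e (a b c p q r : 'I_d) :
  tcoef3 (phi_gen (lbr3e (gen_idx a) (gen_idx b) (gen_idx c))) p q r =
    ((p == a :> nat) && (q == b :> nat) && (r == c :> nat))%:R
  - ((p == b :> nat) && (q == a :> nat) && (r == c :> nat))%:R
  - ((p == c :> nat) && (q == a :> nat) && (r == b :> nat))%:R
  + ((p == c :> nat) && (q == b :> nat) && (r == a :> nat))%:R.
Proof. by rewrite /lbr3e !phi_gen_hom.2 tcoef3_br2 // !coef1_phi_gen_e -!natrM !mulnb. Qed.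

(* [[e_i, e_j], e_l] = e_i e_j e_l - e_j e_i e_l - e_l e_i e_j + e_l e_j e_i, and for a
   Hall triple the word e_j e_i e_l (if j < l) or e_j e_j e_i (if j = l) occurs in the
   expansion of no other Hall triple. *)
Definition hall_witness (t : 'I_d * 'I_d * 'I_d) : 'I_d * 'I_d * 'I_d :=
  let: (i, j, l) := t in if (j < l)%N then (j, i, l) else (j, j, i).

Definition hall_sign (t : 'I_d * 'I_d * 'I_d) : K := if (t.1.2 < t.2)%N then -1 else 1.

Ltac decide_indicators :=
  repeat match goal with
  | |- context [ (nat_of_bool ?b)%:R ] =>
      lazymatch b with
      | true => fail
      | false => fail
      | _ => first [ rewrite (_ : b = false); last by apply/negP; lia
                   | rewrite (_ : b = true); last by lia ]
      end
  end.

Lemma coef3_phi_gen_hall t t' : hall_triple t -> hall_triple t' ->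
  tcoef3 (phi_gen (hall_lbr3e t')) (hall_witness t).1.1 (hall_witness t).1.2 (hall_witness t).2 =
  if t' == t then hall_sign t else 0.
Proof.
case: t t' => [[i j] l] [[i' j'] l']; rewrite /hall_triple /hall_witness /hall_sign /=.
move=> hall hall'; case: eqP => [[-> -> ->]|ne].
  by case: ifP => lt_jl; rewrite coef3_phi_gen_lbr3e /=; decide_indicators;
    rewrite /= ?mulr0n ?mulr1n; ring.
have {}ne : ~ (i' = i :> nat /\ j' = j :> nat /\ l' = l :> nat).
  by move=> [/val_inj ei [/val_inj ej /val_inj el]]; apply: ne; rewrite ei ej el.
by case: ifP => lt_jl; rewrite coef3_phi_gen_lbr3e /=; decide_indicators; rewrite /= ?mulr0n; ring.
Qed.

Lemma coef3_phi_gen_sum D (c : 'I_D -> K) (x : 'I_D -> F) p q r :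
  tcoef3 (phi_gen (\sum_j c j *: x j)) p q r = \sum_j c j * tcoef3 (phi_gen (x j)) p q r.
Proof.
by rewrite linear_sum /tcoef3 sum_ffunE; apply: eq_bigr => j _; rewrite linearZ ffunE.
Qed.

Lemma hall_coef_eq0 D (ts : 'I_D -> 'I_d * 'I_d * 'I_d) (c : 'I_D -> K) v :
  injective ts -> (forall j, hall_triple (ts j)) ->
  (forall p q r, tcoef3 (phi_gen v) p q r = 0) ->
  RFF (\sum_j c j *: hall_lbr3e (ts j) + v) -> forall i, c i = 0.
Proof.
move=> ts_inj hall_ts v0 RFFs i.
have := coef3_phi_gen_RFF RFFs
  (hall_witness (ts i)).1.1 (hall_witness (ts i)).1.2 (hall_witness (ts i)).2.
rewrite linearD tcoef3D coef3_phi_gen_sum v0 addr0 (bigD1 i) //= big1 => [|j ne_ji]; last first.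
  by rewrite coef3_phi_gen_hall // (inj_eq ts_inj) (negbTE ne_ji) mulr0.
rewrite coef3_phi_gen_hall // eqxx addr0 => /eqP; rewrite mulf_eq0 => /orP[/eqP //|].
by rewrite /hall_sign; case: ifP; rewrite ?oppr_eq0 oner_eq0.
Qed.

Lemma two_nil_mult_heis : (1 < m)%N ->
  two_nil_mult_abelian_of_dim pi #|[set t : 'I_d * 'I_d * 'I_d | hall_triple t]|.
Proof.
set HT := [set t | hall_triple t] => lt_1m.
have hall_ts (j : 'I_#|HT|) : hall_triple (enum_val j) by have := enum_valP j; rewrite inE.
apply: (two_nil_mult_of_basis (x := hall_lbr3e \o enum_val)) => [|i|c|].
- exact: Rker_L3.
- exact: L3_gen.
- move=> RFFc; apply: (hall_coef_eq0 (v := 0) enum_val_inj hall_ts); last by rewrite addr0.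
  by move=> *; rewrite linear0 /tcoef3 ffunE.
- apply: span_modRFF_L3 => [t hall_t|q r]; last exact/span_modRFF_RFF/RFF_lbr3e_z.
  have HTt : t \in HT by rewrite inE.
  by rewrite -(enum_rankK_in HTt HTt); apply: (span_modRFF_basis pi (hall_lbr3e \o enum_val)).
Qed.

Section OneHeisenbergPair.
Hypothesis m_eq1 : m = 1%N.

Lemma x_idx0_val : x_idx 0 = 0%N :> nat.
Proof. by rewrite x_idx_val // m_eq1. Qed.

Lemma y_idx0_val : y_idx 0 = 1%N :> nat.
Proof. by rewrite y_idx_val m_eq1. Qed.

Lemma span_modRFF_lbr3e_z1 D (x : 'I_D -> F) :
  (forall q r : 'I_n, (q < 2)%N -> (r < 2)%N -> (q <= r)%N -> span_modRFF pi x (lbr4_xy q r)) ->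
  forall q r, span_modRFF pi x (lbr3e zc q r).
Proof.
move=> S_lbr4_xy q r; have lt_0m : (0 < m)%N by rewrite m_eq1.
apply: (span_modRFF_congr (RFF_lbr3e_z_sub q r lt_0m)); rewrite -/(lbr4_xy q r).
have x0 := x_idx0_val; have y0 := y_idx0_val.
case: (ltnP q 2) => lt_q2; last by apply/span_modRFF_RFF/RFF_of_RF/RF_lbr_xy_e => //; lia.
case: (ltnP r 2) => lt_r2.
  case: (leqP q r) => [le_qr|lt_rq]; first exact: S_lbr4_xy.
  have -> : q = y_idx 0 by apply/val_inj => /=; lia.
  have -> : r = x_idx 0 by apply/val_inj => /=; lia.
  rewrite /lbr4_xy lbr_jacobi_swap [lbr (e (y_idx 0)) _]lbr_anti -/(lbr_xy 0) linearNr /=.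
  rewrite lbr_alt oppr0 addr0.
  by apply: S_lbr4_xy; lia.
rewrite /lbr4_xy lbr_jacobi_swap; apply/span_modRFF_RFF/spanD.
  by apply/RFF_of_RF/RF_lbr_xy_e => //; lia.
by apply/RFF_gen_last/Rker_e_br0; apply/negP; lia.
Qed.

Lemma heis_form1 (u v : 'rV[K]_n) :
  heis_form u v = u 0 (x_idx 0) * v 0 (y_idx 0) - u 0 (y_idx 0) * v 0 (x_idx 0).
Proof.
have lt_0m : (0 < m)%N by rewrite m_eq1.
rewrite /heis_form (big_pred1 (Ordinal lt_0m)) // => i /=.
by apply/esym/eqP/val_inj => /=; have := ltn_ord i; lia.
Qed.

Definition xy_idx (i : 'I_2) : 'I_n := if i == 0 :> nat then x_idx 0 else y_idx 0.

Definition comm_xy (i j : 'I_2) : K :=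
  ((i == 0 :> nat) && (j == 1 :> nat))%:R - ((i == 1 :> nat) && (j == 0 :> nat))%:R.

(* The letters 0 and 1 of [tens K 2] stand for x and y, and z goes to their commutator. *)
Definition tens_of_xy (a : L) : tens K 2 :=
  [ffun w => match w with
   | inl (inl i) => (f a 0 (xy_idx i) : K^o)
   | inl (inr (i, j)) => f a 0 zc * comm_xy i j
   | _ => 0 end].

Lemma xy_idx_neq_zc i : xy_idx i != zc.
Proof.
by rewrite -val_eqE /= heis_zidx_val /xy_idx; case: ifP => _; rewrite ?x_idx0_val ?y_idx0_val; lia.
Qed.

Lemma tens_of_xy_hom : lie_hom (tens_of_xy : L -> tens_lie K 2 2).
Proof.
split=> [c a b|a b]; apply/ffunP => -[[i|[i j]]|[?|?]]; rewrite !ffunE //=.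
- by rewrite linearP !mxE.
- by rewrite linearP /= !mxE /GRing.scale /=; ring.
- by rewrite scaler0 addr0.
- by rewrite scaler0 addr0.
- by rewrite f_lbr mxE mxE eqxx (negbTE (xy_idx_neq_zc i)) mulr0.
rewrite f_lbr !mxE !eqxx mulr1 heis_form1 /tcoef1 !ffunE /=.
by case: i j => [[|[|?]] ?] [[|[|?]] ?] //=; rewrite /comm_xy /xy_idx /=; ring.
Qed.

Lemma tens_of_xy_trunc a : tens_trunc 2 (tens_of_xy a) = tens_of_xy a.
Proof. by apply/ffunP => -[[i|[i j]]|[?|?]]; rewrite !ffunE. Qed.

Variable phi_xy : F -> tens_lie K 2 4.
Hypothesis phi_xy_hom : lie_hom phi_xy.
Hypothesis phi_xy_iota : forall t, phi_xy (iota t) = tens_of_xy (pi (iota t)).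
HB.instance Definition _ := GRing.isLinear.Build K F (tens K 2) *:%R phi_xy phi_xy_hom.1.

Lemma phi_xy_trunc v : tens_trunc 2 (phi_xy v) = tens_of_xy (pi v).
Proof.
exact: (tens_trunc_free_hom free pi_hom tens_of_xy_hom phi_xy_hom (isT : (2 <= 4)%N)
  tens_of_xy_trunc).
Qed.

Lemma coef1_phi_xy_e (p : 'I_n) i : tcoef1 (phi_xy (e p)) i = (xy_idx i == p)%:R.
Proof.
have /ffunP/(_ (inl (inl i))) := phi_xy_trunc (e p).
by rewrite !ffunE /= eE gK mxE eqxx.
Qed.

Lemma coef4_phi_xy_RFF u : RFF u -> forall i j l o, tcoef4 (phi_xy u) i j l o = 0.
Proof.
move=> RFFu i j l o; apply: (RFF_order_gt (k := 2) phi_xy_hom _ RFFu) => // r Rr w le_w2.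
have /ffunP/(_ w) := phi_xy_trunc r; rewrite !ffunE le_w2 Rr linear0 => ->.
by case: w le_w2 => [[i'|[i' j']]|[?|?]] //= _; rewrite !mxE ?mul0r.
Qed.

Lemma coef1_phi_xy_x i : tcoef1 (phi_xy (e (x_idx 0))) i = (i == 0 :> nat)%:R.
Proof.
rewrite coef1_phi_xy_e -val_eqE.
by case: i => [[|[|?]] ?] //=; rewrite /xy_idx /= ?x_idx0_val ?y_idx0_val.
Qed.

Lemma coef1_phi_xy_y i : tcoef1 (phi_xy (e (y_idx 0))) i = (i == 1 :> nat)%:R.
Proof.
rewrite coef1_phi_xy_e -val_eqE.
by case: i => [[|[|?]] ?] //=; rewrite /xy_idx /= ?x_idx0_val ?y_idx0_val.
Qed.

Definition lbr4_xy_basis (s : 'I_3) : F :=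
  match val s with
  | 0 => lbr4_xy (x_idx 0) (x_idx 0)
  | 1 => lbr4_xy (x_idx 0) (y_idx 0)
  | _ => lbr4_xy (y_idx 0) (y_idx 0)
  end.

Definition lbr4_xy_witness (s : 'I_3) : 'I_2 * 'I_2 * 'I_2 * 'I_2 :=
  match val s with
  | 0 => (ord_max, ord0, ord0, ord0)
  | 1 => (ord0, ord0, ord_max, ord_max)
  | _ => (ord0, ord_max, ord_max, ord_max)
  end.

Definition lbr4_xy_sign (s : 'I_3) : K := if val s == 2 then 1 else -1.

Lemma coef4_phi_xy_lbr4_xy_basis s s' :
  tcoef4 (phi_xy (lbr4_xy_basis s)) (lbr4_xy_witness s').1.1.1 (lbr4_xy_witness s').1.1.2
    (lbr4_xy_witness s').1.2 (lbr4_xy_witness s').2 = if s == s' then lbr4_xy_sign s else 0.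
Proof.
have phi_xy_lbr4_xy q r i j l o : tcoef4 (phi_xy (lbr4_xy q r)) i j l o =
    let X := phi_xy (lbr (lbr_xy 0) (e q)) in
    tcoef3 X i j l * tcoef1 (phi_xy (e r)) o - tcoef1 (phi_xy (e r)) i * tcoef3 X j l o.
  rewrite /lbr4_xy phi_xy_hom.2 tcoef4_br_order2 // /lbr_xy !phi_xy_hom.2.
  by do 2!apply: tens_order_gt_br; apply: tens_order_gt0.
rewrite -val_eqE; case: s s' => [[|[|[|?]]] ?] [[|[|[|?]]] ?] //=.
all: rewrite phi_xy_lbr4_xy /= /lbr_xy !phi_xy_hom.2 !tcoef3_br2 //.
all: rewrite !coef1_phi_xy_x !coef1_phi_xy_y /=.
all: by rewrite ?mulr0n ?mulr1n /lbr4_xy_sign /=; ring.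
Qed.

Lemma coef3_phi_gen_lbr4_xy_basis s p q r : tcoef3 (phi_gen (lbr4_xy_basis s)) p q r = 0.
Proof. by rewrite /lbr4_xy_basis; case: (val s) => [|[|?]]; apply: coef3_phi_gen_lbr4_xy. Qed.

Lemma coef4_phi_xy_sum D (c : 'I_D -> K) (x : 'I_D -> F) i j l o :
  tcoef4 (phi_xy (\sum_s c s *: x s)) i j l o = \sum_s c s * tcoef4 (phi_xy (x s)) i j l o.
Proof.
by rewrite linear_sum /tcoef4 sum_ffunE; apply: eq_bigr => s _; rewrite linearZ ffunE.
Qed.

Lemma lbr4_xy_mem_basis (q r : 'I_n) :
  (q < 2)%N -> (r < 2)%N -> (q <= r)%N -> exists s, lbr4_xy q r = lbr4_xy_basis s.
Proof.
have Ex (p : 'I_n) : p = 0%N :> nat -> p = x_idx 0.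
  by move=> p0; apply/val_inj; rewrite /= x_idx0_val.
have Ey (p : 'I_n) : p = 1%N :> nat -> p = y_idx 0.
  by move=> p1; apply/val_inj; rewrite /= y_idx0_val.
move=> lt_q2 lt_r2 le_qr; case: (ltnP q 1) => [q0|q1].
  case: (ltnP r 1) => [r0|r1]; first by exists ord0; rewrite (Ex q) 1?(Ex r) //; lia.
  by exists (@Ordinal 3 1 isT); rewrite (Ex q) 1?(Ey r) //; lia.
by exists ord_max; rewrite (Ey q) 1?(Ey r) //; lia.
Qed.

Lemma two_nil_mult_heis1 :
  two_nil_mult_abelian_of_dim pi (#|[set t : 'I_d * 'I_d * 'I_d | hall_triple t]| + 3).
Proof.
set HT := [set t | hall_triple t].
have hall_ts (j : 'I_#|HT|) : hall_triple (enum_val j) by have := enum_valP j; rewrite inE.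
pose x (i : 'I_(#|HT| + 3)) :=
  match split i with inl j => hall_lbr3e (enum_val j) | inr s => lbr4_xy_basis s end.
have x_l j : x (lshift 3 j) = hall_lbr3e (enum_val j) by rewrite /x (unsplitK (inl j)).
have x_r s : x (rshift #|HT| s) = lbr4_xy_basis s by rewrite /x (unsplitK (inr s)).
apply: (two_nil_mult_of_basis (x := x)) => [|i|c|].
- exact: Rker_L3.
- by rewrite /x; case: (split i) => [j|[[|[|?]] ?]]; apply: L3_gen.
- rewrite big_split_ord (eq_bigr _ (fun j _ => congr1 _ (x_l j))).
  rewrite (eq_bigr _ (fun s _ => congr1 _ (x_r s))) => RFFc.
  have c_l j : c (lshift 3 j) = 0.
    apply: (hall_coef_eq0 enum_val_inj hall_ts _ RFFc) => p q r.
    by rewrite coef3_phi_gen_sum big1 // => s _; rewrite coef3_phi_gen_lbr4_xy_basis mulr0.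
  have c_r s : c (rshift #|HT| s) = 0.
    have := coef4_phi_xy_RFF RFFc (lbr4_xy_witness s).1.1.1 (lbr4_xy_witness s).1.1.2
      (lbr4_xy_witness s).1.2 (lbr4_xy_witness s).2.
    rewrite linearD tcoef4D !coef4_phi_xy_sum big1 ?add0r => [|j _]; last by rewrite c_l mul0r.
    rewrite (bigD1 s) //= big1 ?addr0 => [|s' ne_s's]; last first.
      by rewrite coef4_phi_xy_lbr4_xy_basis (negbTE ne_s's) mulr0.
    rewrite coef4_phi_xy_lbr4_xy_basis eqxx => /eqP; rewrite mulf_eq0 => /orP[/eqP //|].
    by rewrite /lbr4_xy_sign; case: ifP; rewrite ?oppr_eq0 oner_eq0.
  by move=> i; rewrite -(splitK i); case: (split i).
- apply: span_modRFF_L3 => [t hall_t|]; last first.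
    apply: span_modRFF_lbr3e_z1 => // q r lt_q2 lt_r2 le_qr.
    have [s ->] := lbr4_xy_mem_basis lt_q2 lt_r2 le_qr.
    by rewrite -x_r; apply: span_modRFF_basis.
  have HTt : t \in HT by rewrite inE.
  by rewrite -(enum_rankK_in HTt HTt) -x_l; apply: span_modRFF_basis.
Qed.

End OneHeisenbergPair.

End HeisenbergPresentation.

Lemma spanning_rows_card (K : fieldType) (N n : nat) (v : 'I_n -> 'rV[K]_N) :
  (forall u : 'rV_N, exists c : 'I_n -> K, u = \sum_i c i *: v i) -> (N <= n)%N.
Proof.
move=> v_span; pose M := \matrix_i v i.
have /mxrankS : (1%:M <= M)%MS.
  apply/row_subP => p; have [c ->] := v_span (row p 1%:M).
  by apply/summx_sub => i _; apply/scalemx_sub; rewrite (_ : v i = row i M) ?row_sub // rowK.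
by rewrite mxrank1 => /leq_trans; apply; apply: rank_leq_row.
Qed.

Section DimensionBound.
Variables (K : fieldType) (V : lmodType K) (N : nat) (f : V -> 'rV[K]_N) (g : 'rV[K]_N -> V).
Hypotheses (f_lin : linear f) (gK : cancel g f).
HB.instance Definition _ := GRing.isLinear.Build K V _ *:%R f f_lin.

Lemma sdim_geq_of_surj n : sdim (setT_ V) n -> (N <= n)%N.
Proof.
move=> [x [_ [_ x_span]]]; apply: (spanning_rows_card (v := f \o x)) => u.
have [c [_ [-> g_u]]] := x_span (g u) I; exists c.
by rewrite -[u]gK g_u addr0 linear_sum; apply: eq_bigr => i _; rewrite linearZ.
Qed.

End DimensionBound.

Theorem theorem2p13 (K : fieldType) (L : lie_algebra K) (n m : nat) :
  sdim (setT_ L) n ->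
  nilpotent L ->
  sdim (L2 L) 1 ->
  (1 <= m)%N ->
  iso_heis_ab L m (n - 2 * m - 1) ->
  forall (F : lie_algebra K) (X : Type) (iota : X -> F) (pi : F -> L),
    free_on iota -> lie_hom pi -> (forall y : L, exists v : F, pi v = y) ->
    two_nil_mult_abelian_of_dim pi
      (if (1 < m)%N then (n * (n - 1) * (n - 2)) %/ 3
       else ((n * (n - 1) * (n - 2)) %/ 3 + 3))%N.
Proof.
(* [nilpotent L] and [sdim (L2 L) 1] follow from the isomorphism with H(m) + A(n - 2m - 1). *)
move=> dim_L _ _ m_gt0 [f [[g fK gK] [f_lin f_br]]] F X iota pi free [pi_lin pi_br] pi_surj.
set k := (n - 2 * m - 1)%N; set d := (m + m + k)%N.
have def_n : n = d.+1 by have := sdim_geq_of_surj f_lin gK dim_L; lia.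
have [e eE] : exists e : 'I_d.+1 -> F, forall p, pi (e p) = g 'e_p.
  by apply: (@fin_all_exists _ (fun=> F) (fun p v => pi v = g 'e_p)) => p; apply: pi_surj.
have [phi_gen [phi_gen_hom [phi_gen_iota _]]] :=
  free (tens_lie K d 3) (tens_of_gen f \o pi \o iota).
have -> : (n * (n - 1) * (n - 2) = 3 * #|[set t : 'I_d * 'I_d * 'I_d | hall_triple t]|)%N.
  by rewrite card_hall_triples def_n subn1 subn2.
rewrite mulKn //.
case: ltnP => [lt_1m|le_m1].
  exact: (two_nil_mult_heis fK gK f_lin f_br pi_lin pi_br eE free phi_gen_hom phi_gen_iota lt_1m).
have m_eq1 : m = 1%N by lia.
have [phi_xy [phi_xy_hom [phi_xy_iota _]]] := free (tens_lie K 2 4) (tens_of_xy f \o pi \o iota).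
exact: (two_nil_mult_heis1 fK gK f_lin f_br pi_lin pi_br eE free phi_gen_hom phi_gen_iota m_eq1
  phi_xy_hom phi_xy_iota).
Qed.
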